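(* For any activation pattern (any choice of diagonal $\{0,1\}$-matrices $R^{(\ell)}$ on the activation edges) and identity output activation $\phi = \mathrm{id}$, the restricted coboundary $\delta_\Omega$ is a square matrix with $\det \delta_\Omega = 1$. Consequently the restricted Laplacian satisfies \[ L_{\mathcal{F}_R}[\Omega,\Omega] = \delta_\Omega^T\, \delta_\Omega, \qquad \det L_{\mathcal{F}_R}[\Omega,\Omega] = 1, \] and in particular is positive definite.
   Context: Consider a feedforward ReLU network with $k$ hidden layers, layer widths $n_0,\dots,n_{k+1}$, weight matrices $W^{(\ell)}\in\mathbb{R}^{n_\ell\times n_{\ell-1}}$ and biases $b^{(\ell)}\in\mathbb{R}^{n_\ell}$. Define the extended weight matrix $\overline{W}^{(\ell)} = (W^{(\ell)}\mid \mathrm{diag}(b^{(\ell)}))$ and the extended activation $\overline{a}^{(\ell)} = (a^{(\ell)}, \mathbf{1}_{n_{\ell+1}})$, with $\overline{a}^{(0)}=\overline{\mathbf{x}}=(\mathbf{x},\mathbf{1}_{n_1})$. A cellular sheaf $\mathcal{F}$ is built on the path graph $v_x - v_{z^{(1)}} - v_{a^{(1)}} - v_{z^{(2)}} - \cdots - v_{a^{(k)}} - v_{z^{(k+1)}} - v_y$ (with $v_{a^{(0)}}\equiv v_x$), with stalks $\mathbb{R}^{n_0+n_1}$ at $v_x$, $\mathbb{R}^{n_\ell}$ at $v_{z^{(\ell)}}$, $\mathbb{R}^{n_\ell+n_{\ell+1}}$ at $v_{a^{(\ell)}}$, $\mathbb{R}^{n_{k+1}}$ at $v_y$. Writing $\mathcal{F}_{v,e}$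 for the restriction map from the stalk at vertex $v$ to the stalk at an incident edge $e$: on the weight edge $e_{z^{(\ell)}}$ (from $v_{a^{(\ell-1)}}$ to $v_{z^{(\ell)}}$, edge stalk $\mathbb{R}^{n_\ell}$) the maps are $\overline{W}^{(\ell)}$ and $I_{n_\ell}$; on the activation edge $e_{a^{(\ell)}}$ (from $v_{z^{(\ell)}}$ to $v_{a^{(\ell)}}$, edge stalk $\mathbb{R}^{n_\ell}$) they are a diagonal $0/1$ matrix $R^{(\ell)}$ and the projection $P_{n_\ell}=(I_{n_\ell}\ 0)$; on the output edge $e_y$ (from $v_{z^{(k+1)}}$ to $v_y$) they are $\phi$ and $I_{n_{k+1}}$. The coboundary is $(\delta x)_e = \mathcal{F}_{v,e}x_v - \mathcal{F}_{u,e}x_u$ for $e=u\to v$, and the sheaf Laplacian is $L=\delta^T\delta$. $\mathcal{F}_R$ denotes this sheaf with the activation pattern frozen at $R$. The fixed (boundary) coordinates $u$ are the whole input stalk at $v_x$ and the ones blocks $\mathbf{1}_{n_{\ell+1}}$ inside each $v_{a^{(\ell)}}$ stalk; the remaining free coordinates are $\omega=(z^{(1)},a^{(1)},\dots,a^{(k)},z^{(k+1)},\hat{y})$. Writing $\delta\overline{\omega}=\delta_\Omega\omega+\delta_U u$ for $\overline{\omega}=u\oplus\omega$, $\delta_\Omega$ is the restriction of the coboundary to the free coordinates and $L_{\mathcal{F}_R}[\Omega,\Omega]$ the corresponding block of the Laplacian. *)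

From mathcomp Require Import all_boot all_order all_algebra.
Set Implicit Arguments. Unset Strict Implicit. Unset Printing Implicit Defensive.
Import Order.TTheory GRing.Theory Num.Theory.
Local Open Scope ring_scope.

(* Entry of a matrix accessed with natural-number indices (0 outside the range). *)
Definition mxn (R : pzRingType) m n (M : 'M[R]_(m, n)) (r c : nat) : R :=
  match @insub _ (fun x => x < m)%N 'I_m r, @insub _ (fun x => x < n)%N 'I_n c with
  | Some r', Some c' => M r' c'
  | _, _ => 0
  end.

(* Vertices of the path graph are numbered 0 .. 2k+2 in path order:
     0 = v_x (= v_{a^(0)}), 2l-1 = v_{z^(l)} (1<=l<=k+1),
     2l = v_{a^(l)} (1<=l<=k), 2k+2 = v_y.
   Edge i (0 <= i <= 2k+1) goes from vertex i to vertex i+1: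
     2l-2 = e_{z^(l)}, 2l-1 = e_{a^(l)}, 2k+1 = e_y. *)
Definition vdim (k : nat) (n : nat -> nat) (j : nat) : nat :=
  if j == k.*2.+2 then n k.+1
  else if odd j then n (j.+1)./2
  else (n j./2 + n (j./2).+1)%N.            (* v_{a^(l)}, l = j/2 ; stalk (a, 1) *)

Definition edim (k : nat) (n : nat -> nat) (i : nat) : nat :=
  if odd i then n (i.+1)./2 else n (i./2).+1.

Section Sheaf.
Variables (R : pzRingType) (k : nat) (n : nat -> nat).
Variables (W : forall l, 'M[R]_(n l, n l.-1)) (b : forall l, 'rV[R]_(n l))
          (Rm : forall l, 'M[R]_(n l)) (phi : 'M[R]_(n k.+1)).

Definition Wbar l : 'M[R]_(n l, n l.-1 + n l) := row_mx (W l) (diag_mx (b l)).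
Definition Pproj l : 'M[R]_(n l, n l + n l.+1) := row_mx 1%:M 0.

(* block (edge i, vertex j) of the coboundary: for e = u -> v,
   (delta x)_e = F_{v,e} x_v - F_{u,e} x_u *)
Definition blk (i j r c : nat) : R :=
  if ~~ odd i then (* weight edge e_{z^(l)}, l = i/2+1, from v_{a^(l-1)} to v_{z^(l)} *)
    let l := (i./2).+1 in
    if j == i then - mxn (Wbar l) r c
    else if j == i.+1 then mxn (1%:M : 'M[R]_(n l)) r c else 0
  else if i == k.*2.+1 then (* output edge e_y from v_{z^(k+1)} to v_y *)
    if j == i then - mxn phi r c
    else if j == i.+1 then mxn (1%:M : 'M[R]_(n k.+1)) r c else 0
  else (* activation edge e_{a^(l)}, l = (i+1)/2, from v_{z^(l)} to v_{a^(l)} *)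
    let l := (i.+1)./2 in
    if j == i then - mxn (Rm l) r c
    else if j == i.+1 then mxn (Pproj l) r c else 0.

Definition NE := (\sum_(i < k.*2.+2) edim k n i)%N.
Definition NV := (\sum_(j < k.*2.+3) vdim k n j)%N.

Definition delta : 'M[R]_(NE, NV) :=
  \mxblock_(i < k.*2.+2, j < k.*2.+3)
     (\matrix_(r < edim k n i, c < vdim k n j) blk i j r c).

Definition Lap : 'M[R]_NV := delta^T *m delta.

End Sheaf.

(* free coordinates: the z-stalks, the a-part of each v_{a^(l)} (1<=l<=k), and v_y *)
Definition freeloc (k : nat) (n : nat -> nat) (j o : nat) : bool :=
  [|| odd j, j == k.*2.+2 | (0 < j)%N && (o < n j./2)%N].

Definition pre (k : nat) (n : nat -> nat) (j : nat) : nat :=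
  (\sum_(i < j) vdim k n i)%N.

Definition Omega (k : nat) (n : nat -> nat) : {set 'I_(NV k n)} :=
  [set c : 'I_(NV k n) | [exists j : 'I_(k.*2.+3),
     [&& (pre k n j <= c)%N, (c < pre k n j + vdim k n j)%N
       & freeloc k n j (c - pre k n j)]]].

Definition nOmega k n : nat := #|Omega k n|.

Definition fOmega k n : 'I_(nOmega k n) -> 'I_(NV k n) := enum_val (A := Omega k n).

Definition deltaOmega (R : pzRingType) k n W b Rm phi : 'M[R]_(NE k n, nOmega k n) :=
  colsub (@fOmega k n) (@delta R k n W b Rm phi).

Definition LapOmega (R : pzRingType) k n W b Rm phi : 'M[R]_(nOmega k n) :=
  mxsub (@fOmega k n) (@fOmega k n) (@Lap R k n W b Rm phi).

Arguments deltaOmega {R} k n W b Rm phi.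
Arguments LapOmega {R} k n W b Rm phi.

From mathcomp Require Import all_boot all_order all_algebra zify.
Import Order.TTheory GRing.Theory Num.Theory.

(* Pair the edge e_t : v_t -> v_(t+1) with the free coordinates of v_(t+1):
   they are exactly the first dim(e_t) coordinates of its stalk, on which the
   target restriction map of e_t (I, P = (I 0), or I for e_y) is the identity.
   This pairing is monotone, hence it is the increasing enumeration of Omega,
   and in these coordinates delta_Omega is block lower bidiagonal with identity
   diagonal blocks (W-bar, R and phi only enter below the diagonal), so its
   determinant is 1 for all weights and activation patterns. Therefore
   L[Omega,Omega] = delta_Omega^T delta_Omega has determinant 1 and
   v^T L[Omega,Omega] v = |delta_Omega v|^2 > 0 for v <> 0. *)

Lemma lt_Tagged (m : nat) (p : 'I_m -> nat) (i j : 'I_m) (o : 'I_(p i)) (o' : 'I_(p j)) :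
  (Tagged (fun i => 'I_(p i)) o < Tagged (fun i => 'I_(p i)) o')%O
  = (i < j) || (i == j) && (o < o').
Proof.
rewrite ltEsig /= leEord ltEord.
case: (ltngtP i j) => [//|ji|/val_inj ij] /=.
  by rewrite (_ : (i == j) = false) //; apply/negbTE; rewrite -val_eqE /= gtn_eqF.
by case: _ / ij in o' *; rewrite tagged_asE eqxx.
Qed.

Lemma enum_val_unique d (T : finPOrderType d) (A : {pred T}) (f : 'I_#|A| -> T) :
  total (<=%O : rel T) -> {mono f : i j / (i <= j)%O} -> (forall i, f i \in A) ->
  Order.enum_val (A := A) =1 f.
Proof.
move=> leT_total f_mono fA i.
pose h := Order.enum_rank_in (fA i) \o f.
have h_mono : {mono h : i j / (i <= j)%O}.
  by move=> i1 i2; rewrite /h /= (Order.le_enum_rank_in leT_total) ?fA ?f_mono.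
have h_id : h =1 id := Order.mono_unique le_total (leqnn _) h_mono (fun _ _ => erefl).
by rewrite -{1}(h_id i) /h /= Order.enum_rankK_in.
Qed.

Lemma enum_val_ordinalE N (A : {pred 'I_N}) (i : 'I_#|A|) :
  enum_val (A := A) i = Order.enum_val (A := A) i.
Proof.
rewrite /Order.enum_val /enum_val (sorted_sort le_trans) //.
rewrite /enum_mem -enumT sorted_filter //; first by move=> x y z; apply: le_trans.
by rewrite leEord -(@sorted_map _ _ val leq) val_enum_ord iota_sorted.
Qed.

Lemma edim_le_vdim_succ k n t : t < k.*2.+2 -> edim k n t <= vdim k n t.+1.
Proof.
move: (odd_double_half t); case: (odd t); move: (t./2) => s <-; rewrite ?add1n ?add0n => ht.
  rewrite /edim /vdim /= odd_double /= doubleK.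
  case: eqP => [Es|_]; last exact: leq_addr.
  by have -> : s = k by lia.
by rewrite /edim /vdim /= odd_double /=; case: eqP => //; lia.
Qed.

Lemma freeloc_succ k n t o : t < k.*2.+2 -> o < vdim k n t.+1 ->
  freeloc k n t.+1 o = (o < edim k n t).
Proof.
rewrite /freeloc /edim /vdim.
move: (odd_double_half t); case: (odd t); move: (t./2) => s <-; rewrite ?add1n ?add0n => ht.
  rewrite /= odd_double /= doubleK.
  case: eqP => [Es|_] //; by have -> : s = k by lia.
rewrite /= odd_double /= doubleK; case: eqP => [|_ ->] //; lia.
Qed.

Lemma mxnE {R : pzRingType} {m m'} (M : 'M[R]_(m, m')) {r c} (r_lt : r < m) (c_lt : c < m') :
  mxn M r c = M (Ordinal r_lt) (Ordinal c_lt).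
Proof. by rewrite /mxn (insubT (fun x => x < m) r_lt) (insubT (fun x => x < m') c_lt). Qed.

Lemma mxn1 (R : pzRingType) m r c :
  r < m -> c < m -> mxn (1%:M : 'M[R]_m) r c = (r == c)%:R%R.
Proof. by move=> r_lt c_lt; rewrite (mxnE _ r_lt c_lt) mxE. Qed.

Lemma mxn_Pproj (R : pzRingType) n l r c :
  r < n l -> c < n l -> mxn (Pproj R n l) r c = (r == c)%:R%R.
Proof.
move=> r_lt c_lt; have c_lt' : c < n l + n l.+1 by apply: leq_trans c_lt (leq_addr _ _).
rewrite (mxnE _ r_lt c_lt') (_ : Ordinal c_lt' = lshift _ (Ordinal c_lt)); last exact: val_inj.
by rewrite /Pproj row_mxEl mxE.
Qed.

Section PathSheaf.
Variables (k : nat) (n : nat -> nat).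

Definition edim_ord (i : 'I_(k.*2.+2)) : nat := edim k n i.
Definition vdim_ord (j : 'I_(k.*2.+3)) : nat := vdim k n j.

Lemma edim_le_vdim_lift (i : 'I_(k.*2.+2)) : edim_ord i <= vdim_ord (lift ord0 i).
Proof. by rewrite /vdim_ord lift0; exact: edim_le_vdim_succ. Qed.

Local Notation esig := (@tagnat.sig _ edim_ord).
Local Notation esig1 := (@tagnat.sig1 _ edim_ord).
Local Notation esig2 := (@tagnat.sig2 _ edim_ord).
Local Notation vsig1 := (@tagnat.sig1 _ vdim_ord).
Local Notation vsig2 := (@tagnat.sig2 _ vdim_ord).

Definition shift_coord (x : {i : 'I_(k.*2.+2) & 'I_(edim_ord i)}) :
  {j : 'I_(k.*2.+3) & 'I_(vdim_ord j)} :=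
  Tagged (fun j => 'I_(vdim_ord j)) (widen_ord (edim_le_vdim_lift (tag x)) (tagged x)).

Definition free_coord (r : 'I_(NE k n)) : 'I_(NV k n) :=
  tagnat.rank (shift_coord (esig r)).

Lemma free_coord_mono : {mono free_coord : r c / (r <= c)%O}.
Proof.
apply: le_mono => r c; rewrite /free_coord tagnat.lt_rank -tagnat.lt_sig.
case: (tagnat.sig r) (tagnat.sig c) => [i o] [j o'].
by rewrite /shift_coord /= !lt_Tagged /= /bump !add1n ltnS (inj_eq (@lift_inj _ ord0)).
Qed.

Lemma sig1_free_coord r : vsig1 (free_coord r) = lift ord0 (esig1 r).
Proof. exact: tagnat.Rank1K. Qed.

Lemma sig2_free_coord r : vsig2 (free_coord r) = esig2 r :> nat.
Proof. by rewrite /free_coord tagnat.sigE12 tagnat.Rank2K. Qed.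

Lemma pre_sum (j : 'I_(k.*2.+3)) : pre k n j = \sum_(i < k.*2.+3 | i < j) vdim_ord i.
Proof. by rewrite /pre (big_ord_widen k.*2.+3 (vdim k n)) // ltnW. Qed.

Lemma mem_Omega (y : 'I_(NV k n)) :
  (y \in Omega k n) = freeloc k n (vsig1 y) (vsig2 y).
Proof.
rewrite inE; apply/existsP/idP => [[j /and3P [lo hi free]]|free].
  have o_lt : y - pre k n j < vdim_ord j by rewrite /vdim_ord; lia.
  have -> : y = @tagnat.Rank _ vdim_ord j (Ordinal o_lt).
    apply: val_inj.
    change (nat_of_ord y = nat_of_ord (@tagnat.Rank _ vdim_ord j (Ordinal o_lt))).
    by rewrite tagnat.RankEsum -pre_sum /=; lia.
  by rewrite tagnat.Rank2K /= tagnat.Rank1K.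
have y_sum : y = pre k n (vsig1 y) + vsig2 y :> nat.
  by rewrite pre_sum; exact: tagnat.rect.
have o_lt : vsig2 y < vdim k n (vsig1 y) := ltn_ord _.
by exists (vsig1 y); rewrite y_sum addKn leq_addr ltn_add2l o_lt.
Qed.

Lemma Omega_free_coord : Omega k n = [set free_coord r | r : 'I_(NE k n)].
Proof.
apply/setP => y; rewrite mem_Omega; apply/idP/imsetP => [free|[r _ ->]]; last first.
  rewrite sig2_free_coord sig1_free_coord lift0 freeloc_succ //.
  exact: leq_trans (ltn_ord _) (edim_le_vdim_lift _).
have sig1_pos : 0 < vsig1 y.
  by move: free; move: (nat_of_ord (vsig2 y)) => o; case: (nat_of_ord _).
have t_lt : (vsig1 y).-1 < k.*2.+2 by have := ltn_ord (vsig1 y); lia.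
have sig1_eq : vsig1 y = ((vsig1 y).-1).+1 :> nat by lia.
have o_lt : vsig2 y < edim k n (vsig1 y).-1.
  by have := @freeloc_succ k n _ (vsig2 y) t_lt; rewrite -sig1_eq => /(_ (ltn_ord _)) <-.
exists (@tagnat.Rank _ edim_ord (Ordinal t_lt) (Ordinal o_lt)) => //.
apply/eqP; rewrite -[X in X == _](@tagnat.sig2K _ vdim_ord y).
rewrite -[X in _ == X](@tagnat.sig2K _ vdim_ord) -val_eqE tagnat.eq_Rank.
rewrite sig2_free_coord sig1_free_coord tagnat.Rank2K /= tagnat.Rank1K eqxx andbT.
by rewrite -val_eqE /= /bump add1n -sig1_eq.
Qed.

Lemma card_Omega : nOmega k n = NE k n.
Proof.
by rewrite /nOmega Omega_free_coord card_imset ?card_ord //; exact: inc_inj free_coord_mono.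
Qed.

Lemma fOmega_free_coord (H : nOmega k n = NE k n) (i : 'I_(nOmega k n)) :
  fOmega i = free_coord (cast_ord H i).
Proof.
rewrite /fOmega enum_val_ordinalE; apply: (@enum_val_unique _ _ _ (free_coord \o cast_ord H)).
- exact: le_total.
- by move=> i1 i2; rewrite /= free_coord_mono !leEord.
- by move=> j; rewrite Omega_free_coord /= imset_f.
Qed.

Section Coboundary.
Variables (R : pzRingType) (W : forall l, 'M[R]_(n l, n l.-1)) (b : forall l, 'rV[R]_(n l))
          (Rm : forall l, 'M[R]_(n l)) (phi : 'M[R]_(n k.+1)).
Local Open Scope ring_scope.

Lemma blk_eq0 t j o o' : j != t -> j != t.+1 -> blk W b Rm phi t j o o' = 0.
Proof. by move=> /negbTE jt /negbTE jt1; rewrite /blk jt jt1; do 2?case: ifP. Qed.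

Lemma blk_succ t o o' : (t < k.*2.+2)%N -> (o < edim k n t)%N -> (o' < edim k n t)%N ->
  blk W b Rm phi t t.+1 o o' = (o == o')%:R.
Proof.
rewrite /blk /edim eqxx gtn_eqF //.
case: ifP => even_t t_lt o_lt o'_lt /=; last by rewrite mxn1.
case: eqP => [t_last|_]; last by rewrite mxn_Pproj.
by rewrite t_last /= doubleK in o_lt o'_lt; rewrite mxn1.
Qed.

Lemma delta_Rank r (t : 'I_(k.*2.+3)) (o : 'I_(vdim_ord t)) :
  delta W b Rm phi r (@tagnat.Rank _ vdim_ord t o) = blk W b Rm phi (esig1 r) t (esig2 r) o.
Proof.
have := congr1 (fun M : 'M[R]_(edim k n (esig1 r), vdim k n t) => M (esig2 r) o)
  (mxblockK (fun (i : 'I_(k.*2.+2)) (j : 'I_(k.*2.+3)) =>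
     \matrix_(r < edim k n i, c < vdim k n j) blk W b Rm phi i j r c) (esig1 r) t).
by rewrite /submxblock !mxE /= tagnat.sig2K => <-.
Qed.

Lemma deltaOmega_castE (H : nOmega k n = NE k n) (r c : 'I_(NE k n)) :
  castmx (erefl, H) (deltaOmega k n W b Rm phi) r c
  = blk W b Rm phi (esig1 r) (esig1 c).+1 (esig2 r) (esig2 c).
Proof.
rewrite castmxE mxE cast_ord_id fOmega_free_coord cast_ordKV.
by rewrite /free_coord tagnat.rankE delta_Rank lift0.
Qed.
End Coboundary.

Local Open Scope ring_scope.

Lemma det_deltaOmega (R : comPzRingType) W b Rm phi (H : nOmega k n = NE k n) :
  \det (castmx (erefl, H) (@deltaOmega R k n W b Rm phi)) = 1.
Proof.
rewrite det_trig; last first.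
  apply/is_trig_mxP => r c lt_rc; have : (r < c)%O := lt_rc.
  rewrite -(@tagnat.lt_sig _ edim_ord) !tagnat.sigE12 lt_Tagged deltaOmega_castE.
  case/orP => [lt_rc1|/andP [eq_rc lt_o]].
    by apply: blk_eq0; lia.
  have eq_rc1 : esig1 r = esig1 c :> nat by apply/eqP.
  by rewrite -eq_rc1 blk_succ ?(ltn_eqF lt_o) ?ltn_ord // eq_rc1.
by rewrite big1 // => r _; rewrite deltaOmega_castE blk_succ ?eqxx.
Qed.
End PathSheaf.

Local Open Scope ring_scope.

Lemma det_gram {R : comPzRingType} {m N} (H : m = N) (A : 'M[R]_(N, m)) :
  \det (A^T *m A) = \det (castmx (erefl N, H) A) ^+ 2.
Proof. by case: N / H A => A; rewrite castmx_id det_mulmx det_tr expr2. Qed.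

Lemma gram_form_gt0 (R : realDomainType) m N (A : 'M[R]_(N, m)) (v : 'cV_m) :
  A *m v != 0 -> 0 < (v^T *m (A^T *m A) *m v) 0 0.
Proof.
move=> Av_neq0; rewrite mulmxA -trmx_mul -mulmxA mxE.
under eq_bigr => i _ do rewrite mxE -expr2.
have sq_ge0 i : 0 <= (A *m v) i 0 ^+ 2 := sqr_ge0 _.
rewrite lt0r sumr_ge0 ?andbT //; apply: contra Av_neq0.
move=> /eqP /(psumr_eq0P (fun i _ => sq_ge0 i)) Av_sq0; apply/eqP/matrixP => i j.
by rewrite ord1 [RHS]mxE; apply/eqP; rewrite -sqrf_eq0 Av_sq0.
Qed.

Lemma gram_pos_def {R : realFieldType} {m N} (H : m = N) (A : 'M[R]_(N, m)) :
  \det (castmx (erefl N, H) A) != 0 ->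
  forall v : 'cV_m, v != 0 -> 0 < (v^T *m (A^T *m A) *m v) 0 0.
Proof.
case: N / H A => A; rewrite castmx_id => detA_neq0 v v_neq0; apply: gram_form_gt0.
have A_unit : A \in unitmx by rewrite unitmxE unitfE.
by apply: contra v_neq0 => /eqP Av0; rewrite -(mulKmx A_unit v) Av0 mulmx0.
Qed.

Theorem lemma3p2 (R : realFieldType) (k : nat) (n : nat -> nat)
  (W : forall l, 'M[R]_(n l, n l.-1)) (b : forall l, 'rV[R]_(n l))
  (Rm : forall l, 'M[R]_(n l)) :
  (forall l, (1 <= l <= k)%N ->
     is_diag_mx (Rm l) /\ forall i, Rm l i i = 0 \/ Rm l i i = 1) ->
  exists H : nOmega k n = NE k n,
    \det (castmx (erefl (NE k n), H) (deltaOmega k n W b Rm 1%:M)) = 1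
    /\ LapOmega k n W b Rm 1%:M = (deltaOmega k n W b Rm 1%:M)^T *m deltaOmega k n W b Rm 1%:M
    /\ \det (LapOmega k n W b Rm 1%:M) = 1
    /\ (forall v : 'cV[R]_(nOmega k n),
          v != 0 -> 0 < (v^T *m LapOmega k n W b Rm 1%:M *m v) 0 0).
Proof.
move=> _; exists (card_Omega k n).
have det_delta : \det (castmx (erefl, card_Omega k n) (deltaOmega k n W b Rm 1%:M)) = 1.
  exact: det_deltaOmega.
have LapE : LapOmega k n W b Rm 1%:M
            = (deltaOmega k n W b Rm 1%:M)^T *m deltaOmega k n W b Rm 1%:M.
  by rewrite /LapOmega /Lap mxsub_mul /deltaOmega trmx_mxsub.
split=> //; split=> //; rewrite LapE; split.
  by rewrite (det_gram (card_Omega k n)) -[RHS](expr1n _ 2); congr (_ ^+ 2).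
by apply: (gram_pos_def (card_Omega k n)); rewrite det_delta oner_neq0.
Qed.
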